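(* There exists a sequence $(S_i)_{i=1}^\infty$ of functions, each submultiplicative on $[1,\infty)$, such that for every nonempty finite set $A\subset\mathbb N$ and every $j\in\mathbb N\setminus A$, $$\sup_{n\ge1}\frac{S_j(n)}{\max_{i\in A}S_i(n)}=\infty.$$
   Context: Let $2\le n_0\le\infty$ and let $S$ be a real-valued function on $[1,n_0]$ (on $[1,\infty)$ if $n_0=\infty$). $S$ is called submultiplicative on $[1,n_0]$ if: (a) $S$ is piecewise-linear, continuous, strictly increasing and concave; (b) $S(x)=x$ for $1\le x\le 2$; (c) $S(xy)\le S(x)S(y)$ for all $x,y$ with $1\le x,y,xy\le n_0$. *)

From Stdlib Require Import Reals List.
Open Scope R_scope.

Definition affine_on (f : R -> R) (a b : R) : Prop :=
  exists c d : R, forall x, a <= x <= b -> f x = c * x + d.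

Definition piecewise_linear_from (f : R -> R) (lo : R) : Prop :=
  forall M, lo <= M ->
    exists (k : nat) (t : nat -> R),
      t 0%nat = lo /\ t k = M /\
      forall i, (i < k)%nat -> t i < t (S i) /\ affine_on f (t i) (t (S i)).

Definition continuous_from (f : R -> R) (lo : R) : Prop :=
  forall x, lo <= x -> forall eps, 0 < eps ->
    exists delta, 0 < delta /\
      forall y, lo <= y -> Rabs (y - x) < delta -> Rabs (f y - f x) < eps.

Definition strictly_increasing_from (f : R -> R) (lo : R) : Prop :=
  forall x y, lo <= x -> x < y -> f x < f y.

Definition concave_from (f : R -> R) (lo : R) : Prop :=
  forall x y l, lo <= x -> lo <= y -> 0 <= l <= 1 ->
    l * f x + (1 - l) * f y <= f (l * x + (1 - l) * y).

(* S is submultiplicative on [1, +oo) (the case n0 = infinity). *)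
Definition submultiplicative_inf (S : R -> R) : Prop :=
  piecewise_linear_from S 1 /\ continuous_from S 1 /\
  strictly_increasing_from S 1 /\ concave_from S 1 /\
  (forall x, 1 <= x <= 2 -> S x = x) /\
  (forall x y, 1 <= x -> 1 <= y -> S (x * y) <= S x * S y).

(* max_{i in A} f i for a nonempty finite list A (0 for the empty list,
   never used). *)
Definition max_over (f : nat -> R) (A : list nat) : R :=
  match A with
  | nil => 0
  | a :: t => fold_right (fun i m => Rmax (f i) m) (f a) t
  end.

From Stdlib Require Import Reals List ZArith Lra Lia Psatz.
Open Scope R_scope.

(* Each [S_seq j] is a lower envelope [x |-> inf_k (2k + x / 2^(expo j k))] of lines
   with superadditive exponents; superadditivity is exactly what makes the envelope
   submultiplicative, and the line [k = 0] is [x |-> x].  The indices k are grouped into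
   doubly exponential stages [tower s <= k < tower (S s)], and in stage s one favoured
   index j (each index is favoured infinitely often) keeps the growth rate of stage
   s-1.  At [x = 2^(expo j K + K)], K the last index of stage s, every line of [S_seq j]
   is at least [K ~ tower s ^ 2], while for every other i the line [k = tower s] of
   [S_seq i] already gives [S_seq i x <= 2 tower s + 1]. *)

Inductive pl_on (f : R -> R) : R -> R -> Prop :=
| pl_affine : forall a b, a < b -> affine_on f a b -> pl_on f a b
| pl_concat : forall a b c, pl_on f a b -> pl_on f b c -> pl_on f a c.

Lemma pl_on_lt f a b : pl_on f a b -> a < b.
Proof. induction 1; lra. Qed.

Lemma affine_on_ext f h a b :
  affine_on f a b -> (forall x, a <= x <= b -> f x = h x) -> affine_on h a b.
Proof.
  intros [c [d H]] E. exists c, d. intros x Hx. rewrite <- E by exact Hx. auto.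
Qed.

Lemma pl_on_ext f h a b :
  pl_on f a b -> (forall x, a <= x <= b -> f x = h x) -> pl_on h a b.
Proof.
  intros H; revert h; induction H as [a b Hab Haf | a b c H1 IH1 H2 IH2]; intros h E.
  - apply pl_affine; [exact Hab | eapply affine_on_ext; eauto].
  - pose proof (pl_on_lt _ _ _ H1). pose proof (pl_on_lt _ _ _ H2).
    apply pl_concat with b; [apply IH1 | apply IH2]; intros x Hx; apply E; lra.
Qed.

Lemma affine_le_between p q c d a b x :
  p * a + q <= c * a + d -> p * b + q <= c * b + d -> a <= x <= b ->
  p * x + q <= c * x + d.
Proof. intros Ha Hb Hx. destruct (Rle_dec 0 (p - c)); nra. Qed.

Lemma pl_min_two_affine_ordered p q c d a b :
  a < b -> p * a + q <= c * a + d -> pl_on (fun x => Rmin (p * x + q) (c * x + d)) a b.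
Proof.
  intros Hab Ha.
  assert (Hleft : forall u v, u < v -> p * u + q <= c * u + d -> p * v + q <= c * v + d ->
            pl_on (fun x => Rmin (p * x + q) (c * x + d)) u v).
  { intros u v Huv Hu Hv. apply pl_affine; [exact Huv|]. exists p, q. intros x Hx.
    apply Rmin_left, (affine_le_between p q c d u v); auto. }
  assert (Hright : forall u v, u < v -> c * u + d <= p * u + q -> c * v + d <= p * v + q ->
            pl_on (fun x => Rmin (p * x + q) (c * x + d)) u v).
  { intros u v Huv Hu Hv. apply pl_affine; [exact Huv|]. exists c, d. intros x Hx.
    apply Rmin_right, (affine_le_between c d p q u v); auto. }
  destruct (Rle_dec (p * b + q) (c * b + d)) as [Hb|Hb]; [now apply Hleft|].
  destruct (Req_dec (p * a + q) (c * a + d)) as [Ha0|Ha0]; [apply Hright; lra|].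
  assert (Hpc : p - c > 0) by nra.
  set (r := (d - q) / (p - c)).
  assert (Hr : p * r + q = c * r + d) by (unfold r; field; lra).
  assert (a < r) by nra. assert (r < b) by nra.
  apply pl_concat with r; [apply Hleft | apply Hright]; lra.
Qed.

Lemma pl_min_two_affine p q c d a b :
  a < b -> pl_on (fun x => Rmin (p * x + q) (c * x + d)) a b.
Proof.
  intros Hab. destruct (Rle_dec (p * a + q) (c * a + d)).
  - now apply pl_min_two_affine_ordered.
  - apply pl_on_ext with (fun x => Rmin (c * x + d) (p * x + q)).
    + apply pl_min_two_affine_ordered; lra.
    + intros x _. apply Rmin_comm.
Qed.

Lemma pl_min_affine f c d a b :
  pl_on f a b -> pl_on (fun x => Rmin (f x) (c * x + d)) a b.
Proof.
  induction 1 as [a b Hab [p [q Hf]] | a b e _ IH1 _ IH2].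
  - apply pl_on_ext with (fun x => Rmin (p * x + q) (c * x + d)).
    + now apply pl_min_two_affine.
    + intros x Hx. now rewrite Hf.
  - now apply pl_concat with b.
Qed.

Lemma pl_on_partition f a b : pl_on f a b ->
  exists (k : nat) (t : nat -> R), t 0%nat = a /\ t k = b /\
    forall i, (i < k)%nat -> t i < t (S i) /\ affine_on f (t i) (t (S i)).
Proof.
  induction 1 as [a b Hab Haf | a b c _ [k1 [t1 [A1 [B1 C1]]]] _ [k2 [t2 [A2 [B2 C2]]]]].
  - exists 1%nat, (fun n => if (n =? 0)%nat then a else b).
    split; [reflexivity|]. split; [reflexivity|].
    intros n Hn. replace n with 0%nat by lia. auto.
  - set (t := fun i => if (i <=? k1)%nat then t1 i else t2 (i - k1)%nat).
    assert (T1 : forall i, (i <= k1)%nat -> t i = t1 i).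
    { intros i Hi. unfold t. destruct (Nat.leb_spec i k1); [reflexivity | lia]. }
    assert (T2 : forall i, (k1 <= i)%nat -> t i = t2 (i - k1)%nat).
    { intros i Hi. unfold t. destruct (Nat.leb_spec i k1); [|reflexivity].
      replace i with k1 by lia. rewrite Nat.sub_diag. congruence. }
    exists (k1 + k2)%nat, t. split; [rewrite T1 by lia; auto|].
    split; [rewrite T2 by lia; replace (k1 + k2 - k1)%nat with k2 by lia; auto|].
    intros i Hi. destruct (Nat.lt_ge_cases i k1).
    + rewrite !T1 by lia. apply C1; lia.
    + rewrite !T2 by lia. replace (S i - k1)%nat with (S (i - k1)) by lia. apply C2; lia.
Qed.

Lemma piecewise_linear_from_pl_on f lo :
  (forall M, lo < M -> pl_on f lo M) -> piecewise_linear_from f lo.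
Proof.
  intros H M HM. destruct (Rle_lt_or_eq_dec lo M HM) as [Hlt|<-].
  - destruct (pl_on_partition _ _ _ (H M Hlt)) as [k [t Ht]]. eauto.
  - exists 0%nat, (fun _ => lo). repeat split; intros; lia.
Qed.

Definition up_nat (x : R) : nat := Z.to_nat (up x).

Lemma up_nat_gt x : 0 <= x -> x < INR (up_nat x).
Proof.
  intros Hx. destruct (archimed x) as [H1 _]. unfold up_nat.
  assert (0 < up x)%Z by (apply lt_0_IZR; lra).
  rewrite INR_IZR_INZ, Z2Nat.id by lia. lra.
Qed.

Section Envelope.
Variable b : nat -> R.
Hypothesis b_pos : forall k, 0 < b k.
Hypothesis b_le1 : forall k, b k <= 1.
Hypothesis b_0 : b 0%nat = 1.
Hypothesis b_submul : forall k m, b (k + m)%nat <= b k * b m.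

Definition line (k : nat) (x : R) : R := 2 * INR k + b k * x.

Fixpoint min_lines (n : nat) (x : R) : R :=
  match n with
  | O => line 0 x
  | S n' => Rmin (min_lines n' x) (line n x)
  end.

(* The infimum over all k: on [0, x], lines with [2 k > x] lie above [line 0 x = x]. *)
Definition envelope (x : R) : R := min_lines (up_nat x) x.

Lemma line_0 x : line 0 x = x.
Proof. unfold line. rewrite b_0. simpl. ring. Qed.

Lemma line_ge_index k x : 0 <= x -> 2 * INR k <= line k x.
Proof. intros Hx. unfold line. pose proof (b_pos k). nra. Qed.

Lemma min_lines_le_line n k x : (k <= n)%nat -> min_lines n x <= line k x.
Proof.
  induction n; intros Hk.
  - replace k with 0%nat by lia. simpl. lra.
  - cbn [min_lines]. destruct (Nat.eq_dec k (S n)) as [->|Hne]; [apply Rmin_r|].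
    eapply Rle_trans; [apply Rmin_l | apply IHn; lia].
Qed.

Lemma min_lines_attained n x : exists k, min_lines n x = line k x.
Proof.
  induction n as [|n [k E]]; [now exists 0%nat|].
  cbn [min_lines]. unfold Rmin. destruct (Rle_dec _ _); eauto.
Qed.

Lemma min_lines_stable n m x :
  0 <= x -> x <= 2 * INR (S n) -> (n <= m)%nat -> min_lines m x = min_lines n x.
Proof.
  intros Hx Hn. induction m; intros Hm.
  - now replace n with 0%nat by lia.
  - destruct (Nat.eq_dec n (S m)) as [->|Hne]; [reflexivity|].
    cbn [min_lines]. rewrite IHm by lia. apply Rmin_left.
    pose proof (min_lines_le_line n 0 x ltac:(lia)). rewrite line_0 in *.
    pose proof (line_ge_index (S m) x Hx).
    assert (INR (S n) <= INR (S m)) by (apply le_INR; lia). lra.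
Qed.

Lemma envelope_le_line k x : 0 <= x -> envelope x <= line k x.
Proof.
  intros Hx. unfold envelope. destruct (le_lt_dec k (up_nat x)).
  - now apply min_lines_le_line.
  - pose proof (min_lines_le_line (up_nat x) 0 x ltac:(lia)). rewrite line_0 in *.
    pose proof (line_ge_index k x Hx). pose proof (up_nat_gt x Hx).
    assert (INR (up_nat x) <= INR k) by (apply le_INR; lia). lra.
Qed.

Lemma envelope_attained x : exists k, envelope x = line k x.
Proof. apply min_lines_attained. Qed.

Lemma envelope_ge B K x : 0 <= x ->
  (forall k, (k <= K)%nat -> B <= b k * x) -> B <= 2 * INR (S K) -> B <= envelope x.
Proof.
  intros Hx Hsmall Hbig. destruct (envelope_attained x) as [k ->].
  destruct (le_lt_dec k K).
  - pose proof (Hsmall k l). pose proof (pos_INR k). unfold line. lra.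
  - pose proof (line_ge_index k x Hx). assert (INR (S K) <= INR k) by (apply le_INR; lia).
    lra.
Qed.

Lemma envelope_pos x : 0 < x -> 0 < envelope x.
Proof.
  intros Hx. destruct (envelope_attained x) as [k ->]. unfold line.
  pose proof (b_pos k). pose proof (pos_INR k). nra.
Qed.

Lemma envelope_eq_min_lines x M : 0 <= x <= M -> envelope x = min_lines (up_nat M) x.
Proof.
  intros [Hx HM]. unfold envelope.
  pose proof (up_nat_gt x Hx). pose proof (up_nat_gt M ltac:(lra)).
  rewrite <- (min_lines_stable (up_nat x) (Nat.max (up_nat x) (up_nat M)) x); try lia;
    try (rewrite S_INR; lra); auto.
  apply min_lines_stable; try lia; try (rewrite S_INR; lra); auto.
Qed.

Lemma pl_on_min_lines n u v : u < v -> pl_on (min_lines n) u v.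
Proof.
  intros Huv. induction n.
  - apply pl_affine; [exact Huv|]. exists 1, 0. intros x _. simpl. rewrite line_0. ring.
  - apply pl_on_ext with (fun x => Rmin (min_lines n x) (b (S n) * x + 2 * INR (S n))).
    + now apply pl_min_affine.
    + intros x _. cbn [min_lines]. unfold line. f_equal. ring.
Qed.

Lemma envelope_piecewise_linear : piecewise_linear_from envelope 1.
Proof.
  apply piecewise_linear_from_pl_on. intros M HM.
  apply pl_on_ext with (min_lines (up_nat M)); [now apply pl_on_min_lines|].
  intros x Hx. symmetry. apply envelope_eq_min_lines. lra.
Qed.

Lemma envelope_increment_le x y : 0 <= x -> 0 <= y -> envelope y - envelope x <= Rabs (y - x).
Proof.
  intros Hx Hy. destruct (envelope_attained x) as [k E]. pose proof (envelope_le_line k y Hy).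
  rewrite E. unfold line in *. pose proof (b_pos k). pose proof (b_le1 k).
  pose proof (Rle_abs (y - x)). pose proof (Rabs_pos (y - x)). nra.
Qed.

Lemma envelope_continuous : continuous_from envelope 1.
Proof.
  intros x Hx eps He. exists eps. split; [exact He|]. intros y Hy Hxy.
  pose proof (envelope_increment_le x y ltac:(lra) ltac:(lra)).
  pose proof (envelope_increment_le y x ltac:(lra) ltac:(lra)).
  rewrite (Rabs_minus_sym x y) in *. apply Rabs_def1; lra.
Qed.

Lemma envelope_increasing : strictly_increasing_from envelope 1.
Proof.
  intros x y Hx Hxy. destruct (envelope_attained y) as [k ->].
  pose proof (envelope_le_line k x ltac:(lra)). unfold line in *.
  pose proof (b_pos k). nra.
Qed.

Lemma envelope_concave : concave_from envelope 1.
Proof.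
  intros x y l Hx Hy Hl. destruct (envelope_attained (l * x + (1 - l) * y)) as [k ->].
  pose proof (envelope_le_line k x ltac:(lra)). pose proof (envelope_le_line k y ltac:(lra)).
  unfold line in *. nra.
Qed.

Lemma envelope_id_1_2 x : 1 <= x <= 2 -> envelope x = x.
Proof.
  intros Hx. apply Rle_antisym.
  - rewrite <- (line_0 x) at 2. apply envelope_le_line. lra.
  - destruct (envelope_attained x) as [[|k] ->]; [rewrite line_0; lra|].
    pose proof (line_ge_index (S k) x ltac:(lra)). rewrite S_INR in *.
    pose proof (pos_INR k). lra.
Qed.

Lemma line_submul k m x y : 1 <= x -> 1 <= y ->
  line (k + m) (x * y) <= line k x * line m y.
Proof.
  intros Hx Hy. unfold line. rewrite plus_INR.
  pose proof (b_submul k m). pose proof (b_pos k). pose proof (b_pos m).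
  assert (x * y * b (k + m)%nat <= x * y * (b k * b m)) by (apply Rmult_le_compat_l; nra).
  (* the cross terms absorb [2 (k + m)]; for k = 0 or m = 0 this uses [b 0 = 1 <= x, y] *)
  assert (2 * (INR k + INR m) <= 2 * INR k * (2 * INR m) + 2 * INR k * (b m * y)
                                 + b k * x * (2 * INR m)).
  { destruct k as [|k]; [rewrite b_0; simpl; pose proof (pos_INR m); nra|].
    destruct m as [|m]; [rewrite b_0; simpl (INR 0); pose proof (pos_INR (S k)); nra|].
    rewrite !S_INR. pose proof (pos_INR k). pose proof (pos_INR m).
    assert (0 <= b (S m) * y) by nra. assert (0 <= b (S k) * x) by nra. nra. }
  nra.
Qed.

Lemma envelope_submultiplicative : submultiplicative_inf envelope.
Proof.
  split; [exact envelope_piecewise_linear|].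
  split; [exact envelope_continuous|].
  split; [exact envelope_increasing|].
  split; [exact envelope_concave|].
  split; [exact envelope_id_1_2|].
  intros x y Hx Hy.
  destruct (envelope_attained x) as [k ->]. destruct (envelope_attained y) as [m ->].
  eapply Rle_trans; [apply (envelope_le_line (k + m)); nra | now apply line_submul].
Qed.

End Envelope.

Definition tower (s : nat) : nat := (2 ^ 2 ^ s)%nat.

(* the stage of k, i.e. the s with [tower s <= k < tower (S s)] *)
Definition stage (k : nat) : nat := Nat.log2 (Nat.log2 k).

Definition rate (s : nat) : nat := (tower (S s) * tower (S s))%nat.

(* Along [s = m^2, ..., m^2 + 2m] this runs through [1, ..., 2m + 1]. *)
Definition favoured (s : nat) : nat := (s - Nat.sqrt s * Nat.sqrt s + 1)%nat.

Definition growth (j k : nat) : nat :=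
  if (favoured (stage k) =? j)%nat then rate (stage k - 1) else rate (stage k).

Definition expo (j k : nat) : nat := (k * growth j k)%nat.

Definition slope (j k : nat) : R := / 2 ^ expo j k.

Definition S_seq (j : nat) : R -> R := envelope (slope j).

Lemma tower_mono s s' : (s <= s')%nat -> (tower s <= tower s')%nat.
Proof.
  intros. unfold tower. apply Nat.pow_le_mono_r; [lia|]. apply Nat.pow_le_mono_r; lia.
Qed.

Lemma rate_mono s s' : (s <= s')%nat -> (rate s <= rate s')%nat.
Proof. intros. unfold rate. apply Nat.mul_le_mono; apply tower_mono; lia. Qed.

Lemma growth_mono j k k' : (k <= k')%nat -> (growth j k <= growth j k')%nat.
Proof.
  intros H. assert (Hs : (stage k <= stage k')%nat)
    by (unfold stage; do 2 apply Nat.log2_le_mono; exact H).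
  destruct (Nat.eq_dec (stage k) (stage k')) as [E|E]; [unfold growth; rewrite E; lia|].
  assert ((growth j k <= rate (stage k))%nat)
    by (unfold growth; destruct (_ =? _)%nat; [apply rate_mono|]; lia).
  assert ((rate (stage k' - 1) <= growth j k')%nat)
    by (unfold growth; destruct (_ =? _)%nat; [|apply rate_mono]; lia).
  assert ((rate (stage k) <= rate (stage k' - 1))%nat) by (apply rate_mono; lia). lia.
Qed.

Lemma expo_mono j k k' : (k <= k')%nat -> (expo j k <= expo j k')%nat.
Proof. intros H. unfold expo. apply Nat.mul_le_mono; [exact H | now apply growth_mono]. Qed.

Lemma expo_superadditive j k m : (expo j k + expo j m <= expo j (k + m))%nat.
Proof.
  unfold expo. pose proof (growth_mono j k (k + m) ltac:(lia)).
  pose proof (growth_mono j m (k + m) ltac:(lia)). nia.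
Qed.

Lemma slope_pos j k : 0 < slope j k.
Proof. apply Rinv_0_lt_compat, pow_lt; lra. Qed.

Lemma slope_le1 j k : slope j k <= 1.
Proof.
  unfold slope. rewrite <- Rinv_1. apply Rinv_le_contravar; [lra | apply pow_R1_Rle; lra].
Qed.

Lemma slope_0 j : slope j 0 = 1.
Proof. apply Rinv_1. Qed.

Lemma slope_submul j k m : slope j (k + m) <= slope j k * slope j m.
Proof.
  unfold slope. rewrite <- Rinv_mult, <- pow_add. apply Rinv_le_contravar.
  - apply pow_lt; lra.
  - apply Rle_pow; [lra | apply expo_superadditive].
Qed.

Lemma S_seq_submultiplicative j : submultiplicative_inf (S_seq j).
Proof.
  apply envelope_submultiplicative;
    [apply slope_pos | apply slope_le1 | apply slope_0 | apply slope_submul].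
Qed.

Lemma INR_pow2 n : INR (2 ^ n) = 2 ^ n.
Proof. rewrite pow_INR. reflexivity. Qed.

Lemma tower_succ s : tower (S s) = (tower s * tower s)%nat.
Proof. unfold tower. rewrite Nat.pow_succ_r', Nat.mul_comm, Nat.pow_mul_r. simpl. lia. Qed.

Lemma tower_gt s : (s < tower s)%nat.
Proof.
  unfold tower. pose proof (Nat.pow_gt_lin_r 2 s ltac:(lia)).
  pose proof (Nat.pow_gt_lin_r 2 (2 ^ s) ltac:(lia)). lia.
Qed.

Lemma log2_pow2_pred e : (1 <= e)%nat -> Nat.log2 (2 ^ e - 1) = (e - 1)%nat.
Proof.
  intros He. apply Nat.log2_unique; [lia|]. destruct e as [|e]; [lia|].
  replace (S e - 1)%nat with e by lia. rewrite Nat.pow_succ_r'.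
  pose proof (Nat.pow_nonzero 2 e ltac:(lia)). lia.
Qed.

Lemma stage_tower s : stage (tower s) = s.
Proof. unfold stage, tower. rewrite !Nat.log2_pow2; lia. Qed.

Lemma stage_tower_pred s : stage (tower (S s) - 1) = s.
Proof.
  unfold stage, tower. pose proof (Nat.pow_nonzero 2 (S s) ltac:(lia)).
  rewrite !log2_pow2_pred; lia.
Qed.

Lemma favoured_unbounded j n : (1 <= j)%nat ->
  exists s, (n <= s)%nat /\ (1 <= s)%nat /\ favoured s = j.
Proof.
  intros Hj. set (m := (n + j)%nat). exists (m * m + (j - 1))%nat.
  split; [nia|]. split; [nia|].
  unfold favoured. rewrite (Nat.sqrt_unique (m * m + (j - 1)) m); nia.
Qed.

Section Separation.
Variables j s : nat.
Hypothesis s_pos : (1 <= s)%nat.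
Hypothesis s_favours_j : favoured s = j.

Let K := (tower (S s) - 1)%nat.
Let T := (expo j K + K)%nat.

Lemma growth_stage_end : growth j K = rate (s - 1).
Proof. unfold growth, K. now rewrite stage_tower_pred, s_favours_j, Nat.eqb_refl. Qed.

Lemma growth_stage_start i : i <> j -> growth i (tower s) = rate s.
Proof.
  intros H. unfold growth. rewrite stage_tower, s_favours_j.
  destruct (Nat.eqb_spec j i); [congruence | reflexivity].
Qed.

Lemma S_seq_favoured_large :
  INR (tower s) * INR (tower s) - 1 <= S_seq j (INR (2 ^ T)).
Proof.
  replace (INR (tower s) * INR (tower s) - 1) with (INR K).
  2: { unfold K. rewrite tower_succ, minus_INR, mult_INR by (pose proof (tower_gt s); nia).
       simpl. lra. }
  rewrite INR_pow2. apply (envelope_ge _ (slope_pos j) _ K); [apply pow_le; lra | |].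
  - intros k Hk.
    assert (slope j K * 2 ^ T = 2 ^ K).
    { unfold slope, T. rewrite pow_add. field. apply pow_nonzero; lra. }
    assert (slope j K <= slope j k).
    { apply Rinv_le_contravar; [apply pow_lt; lra | apply Rle_pow; [lra | now apply expo_mono]]. }
    assert (INR K < 2 ^ K) by (rewrite <- INR_pow2; apply lt_INR, Nat.pow_gt_lin_r; lia).
    assert (0 <= 2 ^ T) by (apply pow_le; lra). nra.
  - rewrite S_INR. pose proof (pos_INR K). lra.
Qed.

Lemma S_seq_other_small i : i <> j -> S_seq i (INR (2 ^ T)) <= 2 * INR (tower s) + 1.
Proof.
  intros Hi. rewrite INR_pow2.
  eapply Rle_trans; [apply (envelope_le_line _ (slope_pos i) (slope_0 i) (tower s));
                     apply pow_le; lra|].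
  unfold line. apply Rplus_le_compat_l.
  assert (HT : (T <= expo i (tower s))%nat).
  { unfold T, expo. rewrite growth_stage_end, (growth_stage_start i Hi). unfold rate, K.
    replace (S (s - 1)) with s by lia. rewrite !tower_succ.
    pose proof (tower_gt s). nia. }
  unfold slope. rewrite Rmult_comm, <- (Rinv_r (2 ^ expo i (tower s))) by (apply pow_nonzero; lra).
  apply Rmult_le_compat_r; [left; apply Rinv_0_lt_compat, pow_lt; lra|].
  apply Rle_pow; [lra | exact HT].
Qed.

Lemma separating_point : exists n : nat, (1 <= n)%nat /\
  INR (tower s) * INR (tower s) - 1 <= S_seq j (INR n) /\
  forall i, i <> j -> S_seq i (INR n) <= 2 * INR (tower s) + 1.
Proof.
  exists (2 ^ T)%nat. split; [pose proof (Nat.pow_nonzero 2 T ltac:(lia)); lia|].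
  split; [exact S_seq_favoured_large | exact S_seq_other_small].
Qed.

End Separation.

Lemma max_over_ge f A i : In i A -> f i <= max_over f A.
Proof.
  destruct A as [|a t]; [contradiction|]. simpl max_over.
  assert (Hbase : f a <= fold_right (fun i m => Rmax (f i) m) (f a) t).
  { induction t; simpl; [lra | eapply Rle_trans; [exact IHt | apply Rmax_r]]. }
  intros [->|Hi]; [exact Hbase|]. clear Hbase. induction t as [|b t IH]; [contradiction|].
  destruct Hi as [->|Hi]; simpl; [apply Rmax_l | eapply Rle_trans; [apply IH, Hi | apply Rmax_r]].
Qed.

Lemma max_over_le f A B : A <> nil -> (forall i, In i A -> f i <= B) -> max_over f A <= B.
Proof.
  destruct A as [|a t]; [congruence|]. intros _ H. simpl max_over.
  assert (f a <= B) by (apply H; left; reflexivity).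
  induction t as [|b t IH]; simpl; [assumption|]. apply Rmax_lub.
  - apply H. right; left; reflexivity.
  - apply IH. intros i [->|Hi]; apply H; [left | right; right]; auto.
Qed.

Lemma quotient_gt_of_bounds K L X M :
  3 <= L -> 3 * K + 3 <= L -> 0 < M <= 2 * L + 1 -> L * L - 1 <= X -> K < X / M.
Proof.
  intros HL HK HM HX. apply Rmult_lt_reg_r with M; [lra|].
  unfold Rdiv. rewrite Rmult_assoc, Rinv_l, Rmult_1_r by lra.
  destruct (Rle_dec K 0); nra.
Qed.

Theorem proposition2p6 :
  exists S : nat -> R -> R,
    (forall i : nat, (1 <= i)%nat -> submultiplicative_inf (S i)) /\
    forall (A : list nat),
      A <> nil ->
      (forall i, In i A -> (1 <= i)%nat) ->
      forall j : nat, (1 <= j)%nat -> ~ In j A ->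
      forall K : R, exists n : nat, (1 <= n)%nat /\
        K < S j (INR n) / max_over (fun i => S i (INR n)) A.
Proof.
  exists S_seq. split; [intros i _; apply S_seq_submultiplicative|].
  intros A HA _ j Hj HjA K.
  destruct (INR_archimed 1 (3 * K + 3) ltac:(lra)) as [N HN].
  destruct (favoured_unbounded j N Hj) as [s [HNs [Hs Hfav]]].
  destruct (separating_point j s Hs Hfav) as [n [Hn [Hlarge Hsmall]]].
  exists n. split; [exact Hn|].
  destruct A as [|a t]; [congruence|].
  apply (quotient_gt_of_bounds K (INR (tower s))); [| | split |].
  - pose proof (le_INR _ _ (tower_mono 1 s Hs)) as H4. simpl in H4. lra.
  - pose proof (lt_INR _ _ (tower_gt s)). pose proof (le_INR _ _ HNs). lra.
  - eapply Rlt_le_trans; [| apply (max_over_ge _ _ a); left; reflexivity].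
    apply envelope_pos; [apply slope_pos | apply lt_0_INR; lia].
  - apply max_over_le; [congruence|]. intros i Hi. apply Hsmall.
    intros ->. contradiction.
  - exact Hlarge.
Qed.
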